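(* Let $A_1,\dots,A_m\in\mathbb{S}^n$ and $b\in\mathbb{R}^m$. If Assumption 1 holds for some $p$, then it holds for every $p'\le p$ such that $\mathcal{M}_{p'}$ is non-empty. Furthermore, if Assumption 1(a) holds for $p=n$, then it holds for every $p'$ such that $\mathcal{M}_{p'}$ is non-empty. In both cases, the associated dimension $m'$ is independent of $p$.
   Context: $\mathbb{S}^n$: real symmetric $n\times n$ matrices; $\langle U,V\rangle=\operatorname{tr}(U^\top V)$. For $p\ge1$, $\mathcal{M}_p=\{Y\in\mathbb{R}^{n\times p}:\langle A_i,YY^\top\rangle=b_i,\ i=1,\dots,m\}$. Assumption 1 (for a given $p$ with $\mathcal{M}_p\ne\emptyset$): either (a) $A_1Y,\dots,A_mY$ are linearly independent in $\mathbb{R}^{n\times p}$ for all $Y\in\mathcal{M}_p$, or (b) $\operatorname{span}\{A_1Y,\dots,A_mY\}$ has the same dimension for all $Y$ in an open neighborhood of $\mathcal{M}_p$ in $\mathbb{R}^{n\times p}$. In either case $m'$ denotes the dimension of $\operatorname{span}\{A_1Y,\dots,A_mY\}$ for $Y\in\mathcal{M}_p$. *)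

From HB Require Import structures.
From mathcomp Require Import all_boot all_order all_algebra.
From mathcomp Require Import all_classical all_reals all_analysis.
Import numFieldTopology.Exports numFieldNormedType.Exports.
Set Implicit Arguments. Unset Strict Implicit. Unset Printing Implicit Defensive.
Import Order.TTheory GRing.Theory Num.Theory.
Local Open Scope ring_scope.
Local Open Scope classical_set_scope.

Definition frob (R : realType) (n p : nat) (U V : 'M[R]_(n, p)) : R :=
  \tr (U^T *m V).

Definition Mset (R : realType) (n m p : nat)
  (A : 'I_m -> 'M[R]_n) (b : 'I_m -> R) : set 'M[R]_(n, p) :=
  [set Y | forall i, frob (A i) (Y *m Y^T) = b i].
Arguments Mset {R n m} p A b _.

(* The m x (n*p) matrix whose rows are vec(A_i Y); its row space is
   span{A_1 Y, ..., A_m Y} (up to the linear isomorphism mxvec). *)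
Definition AYmx (R : realType) (n m p : nat)
  (A : 'I_m -> 'M[R]_n) (Y : 'M[R]_(n, p)) : 'M[R]_(m, n * p) :=
  \matrix_(i < m) mxvec (A i *m Y).

Definition spandim (R : realType) (n m p : nat)
  (A : 'I_m -> 'M[R]_n) (Y : 'M[R]_(n, p)) : nat :=
  \rank (AYmx A Y).
Arguments AYmx {R n m p} A Y.
Arguments spandim {R n m p} A Y.

Definition assum1a (R : realType) (n m p : nat)
  (A : 'I_m -> 'M[R]_n) (b : 'I_m -> R) : Prop :=
  forall Y : 'M[R]_(n, p), Mset p A b Y -> row_free (AYmx A Y).

Definition assum1b (R : realType) (n m p : nat)
  (A : 'I_m -> 'M[R]_n) (b : 'I_m -> R) : Prop :=
  exists U : set 'M[R]_(n, p), [/\ open U, Mset p A b `<=` U &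
    forall Y Z, U Y -> U Z -> spandim A Y = spandim A Z].
Arguments assum1a {R n m} p A b.
Arguments assum1b {R n m} p A b.

(* Assumption 1 for p (including the standing requirement M_p <> empty). *)
Definition assum1 (R : realType) (n m p : nat)
  (A : 'I_m -> 'M[R]_n) (b : 'I_m -> R) : Prop :=
  (exists Y : 'M[R]_(n, p), Mset p A b Y) /\
  (assum1a p A b \/ assum1b p A b).
Arguments assum1 {R n m} p A b.

From HB Require Import structures.
From mathcomp Require Import all_boot all_order all_algebra.
From mathcomp Require Import all_classical all_reals all_analysis.
From mathcomp Require Import zify ring.
Import numFieldTopology.Exports numFieldNormedType.Exports.
Set Implicit Arguments.
Unset Strict Implicit.
Unset Printing Implicit Defensive.
Import Order.TTheory GRing.Theory Num.Theory.
Local Open Scope ring_scope.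
Local Open Scope classical_set_scope.

(* Everything in Assumption 1 depends on Y only through its Gram matrix
   Y Y^T: membership in M_p because <A_i, Y Y^T> = b_i, and the dimension
   of span{A_i Y} because (sum_i c_i A_i) Y = 0 iff (sum_i c_i A_i) Y Y^T = 0.
   Padding Y with zero columns keeps Y Y^T and is continuous, which carries
   Assumption 1 and m' from p down to any p' <= p.  Conversely, if Y has more
   than n columns they are dependent, and a Householder reflection sending
   e_1 to a unit vector of the kernel makes the first column of Y vanish
   without changing Y Y^T; so every Gram matrix is the Gram matrix of an
   n x n matrix, and Assumption 1(a) for p = n reaches every p'. *)

Definition gram {R : pzRingType} {n p : nat} (Y : 'M[R]_(n, p)) : 'M[R]_n :=
  Y *m Y^T.

Definition gram_embeds (R : pzRingType) (n p' p : nat) :=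
  forall Y' : 'M[R]_(n, p'), exists Z : 'M[R]_(n, p), gram Z = gram Y'.

Lemma gram_mul_orthonormal (R : comPzRingType) n k p
    (Y : 'M[R]_(n, k)) (P : 'M[R]_(k, p)) :
  P *m P^T = 1%:M -> gram (Y *m P) = gram Y.
Proof. by move=> PP; rewrite /gram trmx_mul mulmxA -(mulmxA Y) PP mulmx1. Qed.

Lemma gram_row0_mx (R : comPzRingType) n k l (W : 'M[R]_(n, l)) :
  gram (row_mx (0 : 'M[R]_(n, k)) W) = gram W.
Proof. by rewrite /gram tr_row_mx mul_row_col mul0mx add0r. Qed.

Lemma pid_mx_orthonormal (R : pzRingType) k p : (k <= p)%N ->
  (pid_mx k : 'M[R]_(k, p)) *m (pid_mx k)^T = 1%:M.
Proof. by move=> le_kp; rewrite tr_pid_mx pid_mx_id // pid_mx_1. Qed.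

Lemma gram_mul_mx_pid (R : comPzRingType) n k p (Y : 'M[R]_(n, k)) :
  (k <= p)%N -> gram (Y *m pid_mx k : 'M[R]_(n, p)) = gram Y.
Proof. by move=> le_kp; apply/gram_mul_orthonormal/pid_mx_orthonormal. Qed.

Lemma gram_embeds_pad (R : comPzRingType) n p' p : (p' <= p)%N ->
  gram_embeds R n p' p.
Proof.
by move=> le_p'p Y'; exists (Y' *m pid_mx p'); apply: gram_mul_mx_pid.
Qed.

Lemma mul_mx_pidE (R : pzRingType) n k p (Y : 'M[R]_(n, k)) i (j : 'I_p) :
  (Y *m pid_mx k) i j = oapp (Y i) 0 (insub (val j)).
Proof.
rewrite mxE; case: insubP => [/= j' _ jj'|/negbTE jk].
  rewrite (bigD1 j') //= mxE -jj' eqxx ltn_ord mulr1 big1 ?addr0 // => l ne_lj.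
  by rewrite mxE -jj' (inj_eq val_inj) (negbTE ne_lj) mulr0.
rewrite big1 // => l _; rewrite mxE ltn_ord andbT.
by case: eqP => [lj|_]; [move: jk; rewrite /= -lj ltn_ord | rewrite mulr0].
Qed.

Lemma mul_mx_pid_continuous (R : numFieldType) n k p :
  continuous (fun Y : 'M[R]_(n, k) => Y *m pid_mx k : 'M[R]_(n, p)).
Proof.
move=> Y U /nbhs_ballP[e /= e_gt0 YeU].
apply/nbhs_ballP; exists e => //= Z [_ YZ].
apply: YeU; split => // i j; rewrite !mul_mx_pidE.
by case: insubP => [j' _ _|_] /=; [exact: YZ | exact: ballxx].
Qed.

Lemma gram_eq0 (R : realDomainType) k l (M : 'M[R]_(k, l)) :
  (gram M == 0) = (M == 0).
Proof.
apply/eqP/eqP => [MM0|->]; last by rewrite /gram mul0mx.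
apply/matrixP => i j; rewrite mxE.
have /matrixP/(_ i i) := MM0; rewrite !mxE.
under eq_bigr do rewrite mxE -expr2.
move=> /psumr_eq0P-/(_ (fun _ _ => sqr_ge0 _) j isT).
by move/eqP; rewrite sqrf_eq0 => /eqP.
Qed.

Lemma mulmx_gram_eq0 (R : realDomainType) j k l
    (B : 'M[R]_(j, k)) (Y : 'M[R]_(k, l)) :
  (B *m gram Y == 0) = (B *m Y == 0).
Proof.
apply/idP/idP => /eqP BY0; last by rewrite /gram mulmxA BY0 mul0mx.
by rewrite -gram_eq0 /gram trmx_mul mulmxA -(mulmxA B) BY0 mul0mx.
Qed.

Section Reflection.
Variables (R : realFieldType) (k : nat).

(* For v = 0 the factor is 2 / 0 = 0, so reflmx 0 = 1. *)
Definition reflmx (v : 'cV[R]_k) : 'M[R]_k :=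
  1%:M - (2 / (v^T *m v) 0 0) *: (v *m v^T).

Lemma tr_reflmx (v : 'cV[R]_k) : (reflmx v)^T = reflmx v.
Proof. by rewrite linearB /= linearZ /= tr_scalar_mx trmx_mul trmxK. Qed.

Lemma reflmx_orthonormal (v : 'cV[R]_k) : reflmx v *m (reflmx v)^T = 1%:M.
Proof.
rewrite tr_reflmx /reflmx; set s := (v^T *m v) 0 0; set c := 2 / s.
set X := v *m v^T.
have XX : X *m X = s *: X.
  rewrite /X mulmxA -(mulmxA v) [v^T *m v]mx11_scalar.
  by rewrite mul_mx_scalar scalemxAl.
have ccs : c * c * s = c *+ 2.
  rewrite /c; have [->|s_neq0] := eqVneq s 0; last by field.
  by rewrite invr0 !mulr0 mul0rn.
have cXcX : (c *: X) *m (c *: X) = c *: X *+ 2.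
  by rewrite -scalemxAl -scalemxAr XX !scalerA ccs scalerMnl.
rewrite mulmxBl !mulmxBr !mul1mx mulmx1 cXcX.
by rewrite mulr2n opprB addrK subrK.
Qed.

Lemma reflmx_swap (e u : 'cV[R]_k) :
  e^T *m e = u^T *m u -> reflmx (e - u) *m e = u.
Proof.
move=> ee_uu; set v := e - u.
have [v0|v_neq0] := eqVneq v 0.
  rewrite /reflmx v0 mul0mx scaler0 subr0 mul1mx.
  by apply/eqP; rewrite -subr_eq0 -/v v0.
set s := (v^T *m v) 0 0; set h := (v^T *m e) 0 0.
have s_neq0 : s != 0.
  apply: contra v_neq0 => /eqP s0.
  by rewrite -trmx_eq0 -gram_eq0 /gram trmxK [_ *m _]mx11_scalar -/s s0 raddf0.
have ue_eu : u^T *m e = e^T *m u.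
  by rewrite -[u^T *m e]trmxK trmx_mul trmxK [e^T *m u]mx11_scalar tr_scalar_mx.
have s2h : s = h *+ 2.
  have vv : v^T *m v = v^T *m e *+ 2.
    by rewrite /v !raddfB /= !mulmxBl ue_eu ee_uu opprB mulr2n.
  by rewrite /s /h vv mulr2n mxE mulr2n.
have h_neq0 : h != 0.
  by apply: contra s_neq0; rewrite s2h => /eqP ->; rewrite mul0rn.
rewrite /reflmx -/s mulmxBl mul1mx -scalemxAl -mulmxA [v^T *m e]mx11_scalar -/h.
rewrite mul_mx_scalar scalerA.
have -> : 2 / s * h = 1.
  by rewrite s2h -mulr_natr; field; rewrite h_neq0.
by rewrite scale1r /v opprB addrC subrK.
Qed.

End Reflection.

Section GramFactor.
Variable R : rcfType.

Lemma exists_unit_kernel n k (Y : 'M[R]_(n, k)) : (n < k)%N ->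
  exists2 u : 'cV[R]_k, Y *m u = 0 & u^T *m u = 1%:M.
Proof.
move=> lt_nk; set r := nz_row (kermx Y^T).
have r_neq0 : r != 0.
  rewrite nz_row_eq0 -mxrank_eq0 mxrank_ker mxrank_tr.
  by have := rank_leq_row Y; lia.
have rY : r *m Y^T = 0 by apply/eqP; rewrite -sub_kermx nz_row_sub.
set x := (r *m r^T) 0 0.
have x_gt0 : 0 < x.
  rewrite lt_def; apply/andP; split.
    apply: contra r_neq0 => /eqP x0.
    by rewrite -gram_eq0 /gram [_ *m _]mx11_scalar -/x x0 raddf0.
  by rewrite /x mxE; apply: sumr_ge0 => j _; rewrite mxE -expr2 sqr_ge0.
set a := (Num.sqrt x)^-1.
have aT : (a *: r^T)^T = a *: r by apply/matrixP => i j; rewrite !mxE.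
exists (a *: r^T).
  by rewrite -scalemxAr -[Y]trmxK -trmx_mul rY trmx0 scaler0.
rewrite aT -scalemxAl -scalemxAr scalerA [_ *m _]mx11_scalar -/x.
by rewrite scale_scalar_mx /a -expr2 exprVn sqr_sqrtr ?ltW // mulVf // gt_eqF.
Qed.

Lemma gram_drop_column n k (Y : 'M[R]_(n, 1 + k)) : (n <= k)%N ->
  exists W : 'M[R]_(n, k), gram W = gram Y.
Proof.
move=> le_nk; have [u Yu uu] := exists_unit_kernel Y le_nk.
set e : 'cV[R]_(1 + k) := col_mx 1%:M 0.
have ee : e^T *m e = 1%:M.
  by rewrite tr_col_mx mul_row_col mulmx1 mulmx0 addr0 trmx1.
set Q := reflmx (e - u).
have YQe : Y *m Q *m e = 0 by rewrite -mulmxA reflmx_swap ?ee.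
exists (rsubmx (Y *m Q)).
rewrite -(gram_mul_orthonormal Y (reflmx_orthonormal (e - u))) -/Q.
have YQl : lsubmx (Y *m Q) = 0.
  by move: YQe; rewrite -{1}[Y *m Q]hsubmxK mul_row_col mulmx1 mulmx0 addr0.
by rewrite -[in RHS](hsubmxK (Y *m Q)) YQl gram_row0_mx.
Qed.

Lemma gram_embeds_square n k p : (n <= p)%N -> gram_embeds R n k p.
Proof.
move=> le_np; elim: k => [|k IH] Y; first exact: gram_embeds_pad.
have [le_kp|lt_pk] := leqP k.+1 p; first exact: gram_embeds_pad.
have [W <-] := gram_drop_column Y (leq_trans le_np (ltnSE lt_pk)).
exact: IH.
Qed.

End GramFactor.

Section Assumption1.
Variables (R : realType) (n m : nat) (A : 'I_m -> 'M[R]_n) (b : 'I_m -> R).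

Lemma mulmx_AYmx p (c : 'rV[R]_m) (Y : 'M[R]_(n, p)) :
  c *m AYmx A Y = mxvec ((\sum_i c 0 i *: A i) *m Y).
Proof.
rewrite mulmx_sum_row mulmx_suml raddf_sum.
by apply: eq_bigr => i _; rewrite /AYmx rowK -scalemxAl /= linearZ.
Qed.

Lemma mulmx_AYmx_gram_eq0 p q (Y : 'M[R]_(n, p)) (Z : 'M[R]_(n, q))
    (c : 'rV[R]_m) :
  gram Y = gram Z -> (c *m AYmx A Y == 0) = (c *m AYmx A Z == 0).
Proof.
move=> YZ; rewrite !mulmx_AYmx !mxvec_eq0.
by rewrite -(mulmx_gram_eq0 _ Y) -(mulmx_gram_eq0 _ Z) YZ.
Qed.

Lemma spandim_gram p q (Y : 'M[R]_(n, p)) (Z : 'M[R]_(n, q)) :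
  gram Y = gram Z -> spandim A Y = spandim A Z.
Proof.
have kerS p1 p2 (Y1 : 'M[R]_(n, p1)) (Y2 : 'M[R]_(n, p2)) : gram Y1 = gram Y2 ->
    (kermx (AYmx A Y1) <= kermx (AYmx A Y2))%MS.
  move=> Y12; rewrite sub_kermx; apply/eqP/row_matrixP => i.
  rewrite row_mul row0; apply/eqP.
  by rewrite -(mulmx_AYmx_gram_eq0 _ Y12) -row_mul mulmx_ker row0.
move=> YZ; have /eqmx_rank : (kermx (AYmx A Y) == kermx (AYmx A Z))%MS.
  by apply/andP; split; apply: kerS; rewrite YZ.
rewrite !mxrank_ker /spandim.
by have := rank_leq_row (AYmx A Y); have := rank_leq_row (AYmx A Z); lia.
Qed.

Lemma Mset_gram p q (Y : 'M[R]_(n, p)) (Z : 'M[R]_(n, q)) :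
  gram Y = gram Z -> Mset p A b Y -> Mset q A b Z.
Proof. by move=> YZ hY i; rewrite -[Z *m _]/(gram Z) -YZ; exact: hY. Qed.

Lemma spandim_Mset_const p (Y Z : 'M[R]_(n, p)) :
  assum1a p A b \/ assum1b p A b -> Mset p A b Y -> Mset p A b Z ->
  spandim A Y = spandim A Z.
Proof.
case=> [ha|[U [_ MU spandimU]]] hY hZ; last by apply: spandimU; apply: MU.
by rewrite /spandim (eqP (ha _ hY)) (eqP (ha _ hZ)).
Qed.

Lemma spandim_transfer p p' (Y : 'M[R]_(n, p)) (Y' : 'M[R]_(n, p')) :
  gram_embeds R n p' p ->
  assum1a p A b \/ assum1b p A b -> Mset p A b Y -> Mset p' A b Y' ->
  spandim A Y = spandim A Y'.
Proof.
move=> embed hab hY hY'; have [Z ZY'] := embed Y'.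
rewrite -(spandim_gram ZY'); apply: spandim_Mset_const hab hY _.
exact: Mset_gram (esym ZY') hY'.
Qed.

Lemma assum1a_transfer p p' :
  gram_embeds R n p' p ->
  assum1a p A b -> assum1a p' A b.
Proof.
move=> embed ha Y' hY'; have [Z ZY'] := embed Y'.
rewrite /row_free -[\rank _]/(spandim A Y') -(spandim_gram ZY').
exact/ha/(Mset_gram (esym ZY') hY').
Qed.

Lemma assum1b_narrow p p' : (p' <= p)%N -> assum1b p A b -> assum1b p' A b.
Proof.
move=> le_p'p [U [oU MU spandimU]].
pose pad (Y : 'M[R]_(n, p')) : 'M[R]_(n, p) := Y *m pid_mx p'.
have Mpad Y : Mset p' A b Y -> Mset p A b (pad Y).
  exact/Mset_gram/esym/gram_mul_mx_pid.
exists (pad @^-1` U); split.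
- by apply: open_comp oU => Y _; apply: mul_mx_pid_continuous.
- by move=> Y /Mpad/MU.
- move=> Y Z hY hZ; rewrite -(spandim_gram (gram_mul_mx_pid Y le_p'p)).
  by rewrite -(spandim_gram (gram_mul_mx_pid Z le_p'p)); apply: spandimU.
Qed.

End Assumption1.

Theorem proposition2 (R : realType) (n m : nat)
  (A : 'I_m -> 'M[R]_n) (b : 'I_m -> R)
  (hsym : forall i, (A i)^T = A i) :
  (* Part 1: Assumption 1 for p is inherited by every 1 <= p' <= p with
     M_p' nonempty, with the same m'. *)
  (forall p p' : nat, (1 <= p')%N -> (p' <= p)%N ->
     assum1 p A b ->
     (exists Y' : 'M[R]_(n, p'), Mset p' A b Y') ->
     assum1 p' A b /\
     (forall (Y : 'M[R]_(n, p)) (Y' : 'M[R]_(n, p')),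
        Mset p A b Y -> Mset p' A b Y' -> spandim A Y = spandim A Y'))
  /\
  (* Part 2: Assumption 1(a) for p = n gives Assumption 1 for every p' >= 1
     with M_p' nonempty, with the same m'. *)
  ((exists Y : 'M[R]_(n, n), Mset n A b Y) -> assum1a n A b ->
   forall p' : nat, (1 <= p')%N ->
     (exists Y' : 'M[R]_(n, p'), Mset p' A b Y') ->
     assum1 p' A b /\
     (forall (Y : 'M[R]_(n, n)) (Y' : 'M[R]_(n, p')),
        Mset n A b Y -> Mset p' A b Y' -> spandim A Y = spandim A Y')).
Proof.
split.
- move=> p p' _ le_p'p [_ hab] hM'.
  have embed : gram_embeds R n p' p := gram_embeds_pad le_p'p.
  split; last by move=> Y Y'; apply: spandim_transfer embed hab.
  split=> //; case: hab => [ha|hb].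
    by left; apply: assum1a_transfer embed ha.
  by right; apply: assum1b_narrow le_p'p hb.
- move=> _ ha p' _ hM'.
  have embed : gram_embeds R n p' n := gram_embeds_square (leqnn n).
  split; first by split=> //; left; apply: assum1a_transfer embed ha.
  by move=> Y Y'; apply: spandim_transfer embed (or_introl ha).
Qed.
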